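(* Let $a,c>0$ and $b,d<0$ be real numbers with $x_A=x_B$, and let $W_0(z)=1$, $W_1(z)=z$, $W_n(z)=(az+b)W_{n-1}(z)+(cz+d)W_{n-2}(z)$ for $n\ge2$. Then $u\le x_\Delta^-$, $u<0$, $(-1)^nW_n(u)>0$ for every $n\ge0$, and if $u\neq x_\Delta^-$ then $u$ is an isolated limit of zeros of $\{W_n(z)\}$.
   Context: Notation: $A(z)=az+b$, $B(z)=cz+d$, $x_A=-b/a$, $x_B=-d/c$, $\Delta(z)=A(z)^2+4B(z)$, $\Delta_\Delta=c^2-a^2B(x_A)$, $x_\Delta^\pm=x_A+\frac{-2c\pm2\sqrt{\Delta_\Delta}}{a^2}$ (here $x_\Delta^+=x_A=x_B$), $g(z)=(1-a)z^2-(b+c)z-d$, $\Delta_g=(b+c)^2+4d(1-a)$, $F=\Delta_g-\Delta_\Delta=d(a-2)^2+bc(2-a)+b^2$. The zeros of $g$ are $x_g^\pm=\frac{b+c}{2(1-a)}\pm\frac{\sqrt{\Delta_g}}{2|1-a|}$ if $a\neq1$, and $x_g^\pm=-d/(b+c)$ if $a=1$ and $b+c\ne0$. Define $u=x_\Delta^-$ if $a<2$ and $F\le0$; $u=x_g^+$ if $a<1$ and $F>0$; $u=x_g^-$ otherwise. For $z=re^{i\theta}$, $\theta\in(-\pi,\pi]$, $\sqrt z:=\sqrt r e^{i\theta/2}$, and $\lambda_\pm(z)=\frac{A(z)\pm\sqrt{\Delta(z)}}{2}$. A number $z^*$ is a limit of zeros if there exist zeros $z_n$ of $W_n$ with $z_n\to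 z^*$; it is isolated if $|\lambda_+(z^* )|\ne|\lambda_-(z^* )|$. *)

From Stdlib Require Import Reals Lra.
Open Scope R_scope.

Definition Af (a b x : R) : R := a * x + b.
Definition Bf (c d x : R) : R := c * x + d.
Definition xA (a b : R) : R := - b / a.
Definition xB (c d : R) : R := - d / c.
Definition DeltaDelta (a b c d : R) : R := c ^ 2 - a ^ 2 * Bf c d (xA a b).
Definition xDeltam (a b c d : R) : R :=
  xA a b + (- 2 * c - 2 * sqrt (DeltaDelta a b c d)) / a ^ 2.
Definition xDeltap (a b c d : R) : R :=
  xA a b + (- 2 * c + 2 * sqrt (DeltaDelta a b c d)) / a ^ 2.
Definition Deltag (a b c d : R) : R := (b + c) ^ 2 + 4 * d * (1 - a).
Definition Fq (a b c d : R) : R := Deltag a b c d - DeltaDelta a b c d.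

(* zeros of g(z) = (1-a)z^2 - (b+c)z - d *)
Definition xgp (a b c d : R) : R :=
  if Req_EM_T a 1 then - d / (b + c)
  else (b + c) / (2 * (1 - a)) + sqrt (Deltag a b c d) / (2 * Rabs (1 - a)).
Definition xgm (a b c d : R) : R :=
  if Req_EM_T a 1 then - d / (b + c)
  else (b + c) / (2 * (1 - a)) - sqrt (Deltag a b c d) / (2 * Rabs (1 - a)).

Definition uu (a b c d : R) : R :=
  if Rlt_dec a 2 then
    if Rle_dec (Fq a b c d) 0 then xDeltam a b c d
    else if Rlt_dec a 1 then xgp a b c d else xgm a b c d
  else xgm a b c d.

Fixpoint Wr (a b c d : R) (n : nat) (x : R) : R :=
  match n with
  | O => 1
  | S m => match m with
           | O => x
           | S k => Af a b x * Wr a b c d m x + Bf c d x * Wr a b c d k x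
           end
  end.

Definition C := (R * R)%type.
Definition RtoC (x : R) : C := (x, 0).
Definition Cadd (z w : C) : C := (fst z + fst w, snd z + snd w).
Definition Csub (z w : C) : C := (fst z - fst w, snd z - snd w).
Definition Cmul (z w : C) : C :=
  (fst z * fst w - snd z * snd w, fst z * snd w + snd z * fst w).
Definition Cscal (r : R) (z : C) : C := (r * fst z, r * snd z).
Definition Cmod (z : C) : R := sqrt (fst z ^ 2 + snd z ^ 2).
(* principal square root: for z = r e^{i theta}, theta in (-pi,pi],
   sqrt z = sqrt r e^{i theta/2}; written out in Cartesian form *)
Definition Csqrt (z : C) : C :=
  (sqrt ((Cmod z + fst z) / 2),
   (if Rle_dec 0 (snd z) then 1 else -1) * sqrt ((Cmod z - fst z) / 2)).

Definition Ac (a b : R) (z : C) : C := Cadd (Cscal a z) (RtoC b).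
Definition Bc (c d : R) (z : C) : C := Cadd (Cscal c z) (RtoC d).
Definition Deltac (a b c d : R) (z : C) : C :=
  Cadd (Cmul (Ac a b z) (Ac a b z)) (Cscal 4 (Bc c d z)).
Definition lamp (a b c d : R) (z : C) : C :=
  Cscal (/ 2) (Cadd (Ac a b z) (Csqrt (Deltac a b c d z))).
Definition lamm (a b c d : R) (z : C) : C :=
  Cscal (/ 2) (Csub (Ac a b z) (Csqrt (Deltac a b c d z))).

Fixpoint Wc (a b c d : R) (n : nat) (z : C) : C :=
  match n with
  | O => RtoC 1
  | S m => match m with
           | O => z
           | S k => Cadd (Cmul (Ac a b z) (Wc a b c d m z))
                         (Cmul (Bc c d z) (Wc a b c d k z))
           end
  end.

Definition limit_of_zeros (a b c d : R) (zs : C) : Prop :=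
  exists (z : nat -> C) (N : nat),
    (forall n, (N <= n)%nat -> Wc a b c d n (z n) = RtoC 0) /\
    (forall eps, 0 < eps -> exists M, forall n, (M <= n)%nat ->
        Cmod (Csub (z n) zs) < eps).

Definition isolated (a b c d : R) (zs : C) : Prop :=
  Cmod (lamp a b c d zs) <> Cmod (lamm a b c d zs).

(* Since x_A = x_B = p > 0 we have A(z) = a (z - p), B(z) = c (z - p), Delta_Delta = c^2
   and x_Delta^- = p - 4c/a^2.  The roots of lambda^2 = A(z) lambda + B(z) give the Binet
   form of W_n(z).  If F <= 0 then u = x_Delta^- is a double root, lambda = -2c/a, so
   W_n(u) = lambda^(n-1) (lambda + n (u - lambda)) with u <= lambda < 0.  If F > 0 then
   u is the root of g satisfying u (c - a p - sqrt Delta_g) = 2 c p; g(u) = 0 says that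
   u itself is a characteristic root, so W_n(u) = u^n.  There the characteristic roots
   are real with A(u) < 0, so the negative one dominates: for z near u with g(z) <> 0,
   (-1)^n W_n(z) has eventually the sign of -g(z).  As g changes sign at its simple root
   u, W_n changes sign across u for large n, and the intermediate value theorem produces
   zeros of W_n converging to u; |lambda_+(u)| <> |lambda_-(u)| because A(u) <> 0. *)

From Stdlib Require Import Reals Lra Lia Psatz ClassicalEpsilon.
Open Scope R_scope.

Lemma nat_ind2 (P : nat -> Prop) :
  P O -> P 1%nat -> (forall n, P n -> P (S n) -> P (S (S n))) -> forall n, P n.
Proof.
  intros H0 H1 HS n.
  enough (H : P n /\ P (S n)) by apply H.
  induction n as [|n [IH0 IH1]]; auto.
Qed.

Section Recurrence.

Variables a b c d : R.

Lemma Wr_SS n x :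
  Wr a b c d (S (S n)) x = Af a b x * Wr a b c d (S n) x + Bf c d x * Wr a b c d n x.
Proof. reflexivity. Qed.

Lemma Wr_binet x l1 l2 : l1 + l2 = Af a b x -> l1 * l2 = - Bf c d x ->
  forall n, (l1 - l2) * Wr a b c d n x = (x - l2) * l1 ^ n - (x - l1) * l2 ^ n.
Proof.
  intros Hsum Hprod.
  apply nat_ind2; [simpl; ring | simpl; ring |].
  intros n IH0 IH1.
  rewrite Wr_SS, <- Hsum.
  replace (Bf c d x) with (- (l1 * l2)) by lra.
  transitivity ((l1 + l2) * ((l1 - l2) * Wr a b c d (S n) x)
                - l1 * l2 * ((l1 - l2) * Wr a b c d n x)); [ring|].
  rewrite IH0, IH1; simpl; ring.
Qed.

Lemma Wr_fixed_root u : u * u = Af a b u * u + Bf c d u ->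
  forall n, Wr a b c d n u = u ^ n.
Proof.
  intros Hu.
  apply nat_ind2; [reflexivity | simpl; ring |].
  intros n IH0 IH1.
  rewrite Wr_SS, IH0, IH1.
  transitivity (u ^ n * (Af a b u * u + Bf c d u)); [simpl; ring|].
  rewrite <- Hu; simpl; ring.
Qed.

Lemma Wr_double_root u l : Af a b u = 2 * l -> Bf c d u = - (l * l) ->
  forall n, Wr a b c d n u * l = l ^ n * (l + INR n * (u - l)).
Proof.
  intros HA HB.
  apply nat_ind2; [simpl; ring | simpl; ring |].
  intros n IH0 IH1.
  rewrite Wr_SS, HA, HB.
  transitivity (2 * l * (Wr a b c d (S n) u * l) - l * l * (Wr a b c d n u * l)); [ring|].
  rewrite IH0, IH1, !S_INR; simpl; ring.
Qed.

Lemma Wr_continuous n : continuity (Wr a b c d n).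
Proof.
  revert n; apply nat_ind2.
  - intros x; apply continuity_pt_const; intros y z; reflexivity.
  - intros x; apply derivable_continuous_pt, derivable_pt_id.
  - intros n IH0 IH1 x.
    change (continuity_pt (fun z => Af a b z * Wr a b c d (S n) z
                                    + Bf c d z * Wr a b c d n z) x).
    unfold Af, Bf; reg; auto.
Qed.

Lemma Wc_RtoC n x : Wc a b c d n (RtoC x) = RtoC (Wr a b c d n x).
Proof.
  revert n; apply nat_ind2; [reflexivity | reflexivity |].
  intros n IH0 IH1.
  change (Cadd (Cmul (Ac a b (RtoC x)) (Wc a b c d (S n) (RtoC x)))
               (Cmul (Bc c d (RtoC x)) (Wc a b c d n (RtoC x))) =
          RtoC (Wr a b c d (S (S n)) x)).
  rewrite IH0, IH1, Wr_SS.
  unfold Cadd, Cmul, Ac, Bc, Cscal, RtoC, Af, Bf; simpl; f_equal; ring.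
Qed.

End Recurrence.

Lemma dominant_root_sign z l1 l2 : l2 < 0 -> Rabs l1 < - l2 -> l2 < z -> z <> l1 ->
  exists N, forall n, (N <= n)%nat ->
    (-1) ^ n * ((z - l2) * l1 ^ n - (z - l1) * l2 ^ n) * (z - l1) < 0.
Proof.
  intros Hl2 Hl1 Hz Hzl1.
  set (q := l1 / l2).
  set (K := Rabs ((z - l2) * (z - l1))).
  assert (Hq : Rabs q < 1).
  { assert (Hql : q * l2 = l1) by (unfold q; field; lra).
    apply Rabs_def1; apply Rabs_def2 in Hl1; nra. }
  assert (HK : 0 <= K) by apply Rabs_pos.
  assert (Hsq : 0 < (z - l1) * (z - l1)).
  { apply Rsqr_pos_lt; intro; apply Hzl1; lra. }
  (* q ^ n -> 0, so the l2-term dominates. *)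
  destruct (pow_lt_1_zero q Hq ((z - l1) * (z - l1) / (K + 1))) as [N HN].
  { apply Rdiv_lt_0_compat; [exact Hsq | lra]. }
  exists N; intros n Hn.
  pose proof (HN n Hn) as Hqn.
  assert (Hpow : (-1) ^ n * l1 ^ n = q ^ n * (- l2) ^ n).
  { rewrite <- !Rpow_mult_distr; f_equal; unfold q; field; lra. }
  assert (Hpow2 : (-1) ^ n * l2 ^ n = (- l2) ^ n).
  { rewrite <- Rpow_mult_distr; f_equal; ring. }
  assert (Hpos : 0 < (- l2) ^ n) by (apply pow_lt; lra).
  assert (Hsmall : (z - l2) * (z - l1) * q ^ n < (z - l1) * (z - l1)).
  { apply Rle_lt_trans with (K * Rabs (q ^ n)).
    - unfold K; rewrite <- Rabs_mult; apply Rle_abs.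
    - apply Rmult_lt_compat_r with (r := K + 1) in Hqn; [|lra].
      unfold Rdiv in Hqn; rewrite Rmult_assoc, Rinv_l in Hqn by lra.
      pose proof (Rabs_pos (q ^ n)); nra. }
  replace ((-1) ^ n * ((z - l2) * l1 ^ n - (z - l1) * l2 ^ n) * (z - l1))
    with (((z - l2) * ((-1) ^ n * l1 ^ n) - (z - l1) * ((-1) ^ n * l2 ^ n)) * (z - l1))
    by ring.
  rewrite Hpow, Hpow2; nra.
Qed.

(* The real restrictions of Delta and of the paper's g; note g(x) = x^2 - A(x) x - B(x). *)
Definition Deltar (a b c d x : R) : R := Af a b x * Af a b x + 4 * Bf c d x.

Definition gfun (a b c d x : R) : R := x * x - Af a b x * x - Bf c d x.

Lemma Wr_sign_eventually a b c d z :
  Af a b z < 0 -> 0 < Deltar a b c d z -> 0 < 2 * z - Af a b z -> gfun a b c d z <> 0 ->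
  exists N, forall n, (N <= n)%nat -> (-1) ^ n * Wr a b c d n z * gfun a b c d z < 0.
Proof.
  unfold Deltar; intros HA HD Hz Hg.
  set (A := Af a b z) in *; set (s := sqrt (A * A + 4 * Bf c d z)).
  assert (Hs : 0 < s) by (apply sqrt_lt_R0; lra).
  assert (Hss : s * s = A * A + 4 * Bf c d z) by (apply sqrt_sqrt; lra).
  set (l1 := (A + s) / 2); set (l2 := (A - s) / 2).
  assert (Hsum : l1 + l2 = A) by (unfold l1, l2; field).
  assert (Hprod : l1 * l2 = - Bf c d z) by (unfold l1, l2; nra).
  assert (Hfactor : gfun a b c d z = (z - l1) * (z - l2)).
  { unfold gfun; fold A.
    replace (Bf c d z) with (- (l1 * l2)) by lra; rewrite <- Hsum; ring. }
  destruct (dominant_root_sign z l1 l2) as [N HN].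
  - unfold l2; lra.
  - apply Rabs_def1; unfold l1, l2; lra.
  - unfold l2; lra.
  - intro Heq; apply Hg; rewrite Hfactor, Heq; ring.
  - exists N; intros n Hn.
    specialize (HN n Hn).
    rewrite <- (Wr_binet a b c d z l1 l2 Hsum Hprod n) in HN.
    replace (l1 - l2) with s in HN by (unfold l1, l2; field).
    assert (Hz2 : 0 < z - l2) by (unfold l2; lra).
    rewrite Hfactor.
    apply Rmult_lt_reg_l with s; [exact Hs|].
    rewrite Rmult_0_r.
    replace (s * ((-1) ^ n * Wr a b c d n z * ((z - l1) * (z - l2))))
      with ((-1) ^ n * (s * Wr a b c d n z) * (z - l1) * (z - l2)) by ring.
    nra.
Qed.

Definition near (u : R) (P : R -> Prop) : Prop :=
  exists del, 0 < del /\ forall z, Rabs (z - u) < del -> P z.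

Lemma near_and u (P Q : R -> Prop) : near u P -> near u Q -> near u (fun z => P z /\ Q z).
Proof.
  intros [d1 [Hd1 HP]] [d2 [Hd2 HQ]].
  exists (Rmin d1 d2); split; [now apply Rmin_glb_lt|].
  intros z Hz; split; [apply HP | apply HQ];
    eapply Rlt_le_trans; eauto; [apply Rmin_l | apply Rmin_r].
Qed.

Lemma near_ball u eps : 0 < eps -> near u (fun z => Rabs (z - u) < eps).
Proof. intros; exists eps; auto. Qed.

Lemma near_pos u f : continuity_pt f u -> 0 < f u -> near u (fun z => 0 < f z).
Proof.
  intros Hf Hu.
  destruct (Hf (f u) Hu) as [del [Hdel H]].
  exists del; split; [exact Hdel|].
  intros z Hz.
  destruct (Req_dec z u) as [->|Hzu]; [exact Hu|].
  assert (Hd : R_dist (f z) (f u) < f u)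
    by (apply H; split; [split; [exact I | auto] | exact Hz]).
  unfold R_dist in Hd; apply Rabs_def2 in Hd; lra.
Qed.

Lemma gfun_sign_change a b c d u e :
  gfun a b c d u = 0 -> 0 < e -> (1 - a) ^ 2 * e ^ 2 < Deltag a b c d ->
  gfun a b c d (u - e) * gfun a b c d (u + e) < 0.
Proof.
  intros Hu He Hsmall.
  set (g1 := 2 * (1 - a) * u - (b + c)).
  (* g1 = g'(u), and g'(u)^2 = Delta_g at a root u of g *)
  assert (Hg1 : g1 * g1 = Deltag a b c d).
  { transitivity (Deltag a b c d + 4 * (1 - a) * gfun a b c d u);
      [unfold g1, Deltag, gfun, Af, Bf; ring | rewrite Hu; ring]. }
  replace (gfun a b c d (u - e) * gfun a b c d (u + e))
    with ((gfun a b c d u - e * g1 + (1 - a) * e ^ 2) * (gfun a b c d u + e * g1 + (1 - a) * e ^ 2))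
    by (unfold g1, gfun, Af, Bf; ring).
  rewrite Hu.
  replace ((0 - e * g1 + (1 - a) * e ^ 2) * (0 + e * g1 + (1 - a) * e ^ 2))
    with (e ^ 2 * ((1 - a) ^ 2 * e ^ 2 - g1 * g1)) by ring.
  rewrite Hg1.
  assert (0 < e ^ 2) by (apply pow_lt; lra).
  nra.
Qed.

Lemma zeros_near_root a b c d u :
  gfun a b c d u = 0 -> Af a b u < 0 -> 0 < 2 * u - Af a b u -> 0 < Deltag a b c d ->
  forall eps, 0 < eps -> exists N, forall n, (N <= n)%nat ->
    exists x, Wr a b c d n x = 0 /\ Rabs (x - u) < eps.
Proof.
  intros Hg HA Hu HDg eps Heps.
  assert (HDu : Deltar a b c d u = (2 * u - Af a b u) ^ 2).
  { transitivity ((2 * u - Af a b u) ^ 2 - 4 * gfun a b c d u);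
      [unfold Deltar, gfun; ring | rewrite Hg; ring]. }
  assert (Hnear : near u (fun z =>
    ((0 < - Af a b z /\ 0 < Deltar a b c d z) /\
     (0 < 2 * z - Af a b z /\ 0 < Deltag a b c d - (1 - a) ^ 2 * (z - u) ^ 2)) /\
    Rabs (z - u) < eps)).
  { repeat apply near_and; try (apply near_ball; exact Heps); apply near_pos;
      unfold Deltar, Af, Bf in *; try reg; nra. }
  destruct Hnear as [del [Hdel Hclose]].
  set (e := del / 2).
  assert (He : 0 < e) by (unfold e; lra).
  assert (Hdist : forall z, z = u - e \/ z = u + e -> Rabs (z - u) = e).
  { intros z [-> | ->]; [replace (u - e - u) with (- e) by ring; rewrite Rabs_Ropp|
      replace (u + e - u) with e by ring]; apply Rabs_pos_eq; lra. }
  destruct (Hclose (u - e)) as [[[HA1 HD1] [Hz1 Hs1]] Heps1];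
    [rewrite Hdist by auto; unfold e; lra|].
  destruct (Hclose (u + e)) as [[[HA2 HD2] [Hz2 _]] _];
    [rewrite Hdist by auto; unfold e; lra|].
  rewrite Hdist in Heps1 by auto.
  assert (Hsign : gfun a b c d (u - e) * gfun a b c d (u + e) < 0).
  { apply gfun_sign_change; auto.
    replace (u - e - u) with (- e) in Hs1 by ring; nra. }
  destruct (Wr_sign_eventually a b c d (u - e)) as [N1 HN1]; try lra;
    [intro H0; rewrite H0 in Hsign; lra|].
  destruct (Wr_sign_eventually a b c d (u + e)) as [N2 HN2]; try lra;
    [intro H0; rewrite H0 in Hsign; lra|].
  exists (Nat.max N1 N2); intros n Hn.
  specialize (HN1 n ltac:(lia)); specialize (HN2 n ltac:(lia)).
  assert (Ht : (-1) ^ n * (-1) ^ n = 1).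
  { rewrite <- Rpow_mult_distr; replace (-1 * -1) with 1 by ring; apply pow1. }
  set (W1 := Wr a b c d n (u - e)) in *; set (W2 := Wr a b c d n (u + e)) in *.
  set (g1 := gfun a b c d (u - e)) in *; set (g2 := gfun a b c d (u + e)) in *.
  assert (HW : W1 * W2 <= 0).
  { assert (Hpos : 0 < ((-1) ^ n * W1 * g1) * ((-1) ^ n * W2 * g2)) by nra.
    replace (((-1) ^ n * W1 * g1) * ((-1) ^ n * W2 * g2))
      with (((-1) ^ n * (-1) ^ n) * (W1 * W2) * (g1 * g2)) in Hpos by ring.
    rewrite Ht in Hpos; nra. }
  destruct (IVT_cor (Wr a b c d n) (u - e) (u + e) (Wr_continuous a b c d n)
              ltac:(lra) HW) as [x [Hx Hx0]].
  exists x; split; [exact Hx0|].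
  apply Rle_lt_trans with e; [apply Rabs_le; lra | exact Heps1].
Qed.

Section Diagonal.

Variables (Z : nat -> R -> Prop) (u : R).

Hypothesis zeros_cluster : forall eps, 0 < eps ->
  exists N, forall n, (N <= n)%nat -> exists x, Z n x /\ Rabs (x - u) < eps.

Let good (m n : nat) (x : R) : Prop :=
  Z n x /\ forall k, (k < m)%nat ->
    (exists y, Z n y /\ Rabs (y - u) < / INR (S k)) -> Rabs (x - u) < / INR (S k).

Lemma good_exists m n : (exists y, Z n y) -> exists x, good m n x.
Proof.
  intros [y0 Hy0].
  induction m as [|m [x [Hx IH]]]; [exists y0; split; [exact Hy0 | intros; lia]|].
  destruct (classic (exists y, Z n y /\ Rabs (y - u) < / INR (S m))) as [[y [Hy Hyu]] | Hnone].
  - exists y; split; [exact Hy|].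
    intros k Hk _; apply Rlt_le_trans with (1 := Hyu).
    apply Rinv_le_contravar; [apply lt_0_INR; lia | apply le_INR; lia].
  - exists x; split; [exact Hx|].
    intros k Hk Hex.
    destruct (Nat.eq_dec k m) as [-> | Hkm]; [contradiction | apply IH; [lia | exact Hex]].
Qed.

Lemma diagonal_zero_sequence :
  exists (z : nat -> R) (N : nat), (forall n, (N <= n)%nat -> Z n (z n)) /\
    forall eps, 0 < eps -> exists M, forall n, (M <= n)%nat -> Rabs (z n - u) < eps.
Proof.
  set (z n := epsilon (inhabits u) (good n n)).
  assert (Hz : forall n, (exists y, Z n y) -> good n n (z n)).
  { intros n Hn; apply epsilon_spec, good_exists, Hn. }
  destruct (zeros_cluster 1 Rlt_0_1) as [N HN].
  assert (HZ : forall n, (N <= n)%nat -> good n n (z n)).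
  { intros n Hn; apply Hz; destruct (HN n Hn) as [y [Hy _]]; exists y; exact Hy. }
  exists z, N; split; [intros n Hn; apply HZ, Hn|].
  intros eps Heps.
  destruct (archimed_cor1 eps Heps) as [[|k] [Hk Hk0]]; [lia|].
  destruct (zeros_cluster (/ INR (S k))) as [M HM];
    [apply Rinv_0_lt_compat, lt_0_INR; lia|].
  exists (Nat.max N (Nat.max M (S k))); intros n Hn.
  apply Rlt_trans with (2 := Hk).
  apply (HZ n ltac:(lia)); [lia | apply HM; lia].
Qed.

End Diagonal.

Lemma limit_of_zeros_of_real a b c d u :
  (forall eps, 0 < eps -> exists N, forall n, (N <= n)%nat ->
     exists x, Wr a b c d n x = 0 /\ Rabs (x - u) < eps) ->
  limit_of_zeros a b c d (RtoC u).
Proof.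
  intros Hacc.
  destruct (diagonal_zero_sequence (fun n x => Wr a b c d n x = 0) u Hacc)
    as [z [N [Hzero Hlim]]].
  exists (fun n => RtoC (z n)), N; split.
  - intros n Hn; rewrite Wc_RtoC, Hzero by exact Hn; reflexivity.
  - intros eps Heps.
    destruct (Hlim eps Heps) as [M HM]; exists M; intros n Hn.
    unfold Cmod, Csub, RtoC; simpl.
    replace ((z n - u) * ((z n - u) * 1) + (0 - 0) * ((0 - 0) * 1))
      with (Rsqr (z n - u)) by (unfold Rsqr; ring).
    rewrite sqrt_Rsqr_abs; apply HM, Hn.
Qed.

Lemma isolated_of_real a b c d u :
  Af a b u <> 0 -> 0 < Deltar a b c d u -> isolated a b c d (RtoC u).
Proof.
  intros HA HD.
  set (D := Deltar a b c d u) in *.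
  assert (HDc : Deltac a b c d (RtoC u) = (D, 0)).
  { unfold Deltac, Cadd, Cmul, Ac, Bc, Cscal, RtoC, D, Deltar, Af, Bf; simpl; f_equal; ring. }
  assert (Hsqrt : Csqrt (D, 0) = (sqrt D, 0)).
  { unfold Csqrt, Cmod; simpl.
    replace (D * (D * 1) + 0 * (0 * 1)) with (D ^ 2) by ring.
    rewrite sqrt_pow2 by lra.
    destruct (Rle_dec 0 0) as [_ | n]; [|lra].
    replace ((D - D) / 2) with 0 by field; rewrite sqrt_0.
    f_equal; [f_equal; field | ring]. }
  assert (Hs : 0 < sqrt D) by (apply sqrt_lt_R0; lra).
  unfold isolated, lamp, lamm; rewrite HDc, Hsqrt.
  unfold Cmod, Cscal, Cadd, Csub, Ac, RtoC; simpl; rewrite !Rmult_1_r.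
  (* |A + s| = |A - s| with s > 0 would force A = 0 *)
  intro Heq; apply sqrt_inj in Heq;
    [| apply Rplus_le_le_0_compat; apply Rle_0_sqr ..].
  apply HA; unfold Af in *; nra.
Qed.

Lemma root_case a b c d u :
  gfun a b c d u = 0 -> u < 0 -> Af a b u < 0 -> 0 < 2 * u - Af a b u -> 0 < Deltag a b c d ->
  (forall n, 0 < (-1) ^ n * Wr a b c d n u) /\
  limit_of_zeros a b c d (RtoC u) /\ isolated a b c d (RtoC u).
Proof.
  intros Hg Hu HA Hz HDg; split; [|split].
  - intro n; rewrite Wr_fixed_root by (unfold gfun in Hg; lra).
    rewrite <- Rpow_mult_distr; apply pow_lt; lra.
  - apply limit_of_zeros_of_real, zeros_near_root; assumption.
  - apply isolated_of_real; [lra|].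
    replace (Deltar a b c d u) with ((2 * u - Af a b u) ^ 2 - 4 * gfun a b c d u)
      by (unfold Deltar, gfun; ring).
    rewrite Hg; nra.
Qed.

Section SharedCenter.

Variables a c p : R.
Hypotheses (Ha : 0 < a) (Hc : 0 < c) (Hp : 0 < p).

(* x_A = x_B = p *)
Local Notation b := (- (a * p)).
Local Notation d := (- (c * p)).

Lemma DeltaDelta_shared : DeltaDelta a b c d = c ^ 2.
Proof.
  unfold DeltaDelta, Bf, xA.
  replace (- b / a) with p by (field; lra); ring.
Qed.

Lemma xDeltam_shared : xDeltam a b c d = p - 4 * c / a ^ 2.
Proof.
  unfold xDeltam; rewrite DeltaDelta_shared, sqrt_pow2 by lra.
  unfold xA; field; lra.
Qed.

Lemma Deltag_shared : Deltag a b c d = (c - a * p) ^ 2 - 4 * c * p * (1 - a).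
Proof. unfold Deltag; ring. Qed.

Lemma Fq_shared : Fq a b c d = p * (a ^ 2 * p - 2 * c * (2 - a)).
Proof. unfold Fq; rewrite DeltaDelta_shared, Deltag_shared; ring. Qed.

Lemma double_root_case : Fq a b c d <= 0 ->
  xDeltam a b c d < 0 /\ forall n, 0 < (-1) ^ n * Wr a b c d n (xDeltam a b c d).
Proof.
  rewrite Fq_shared, xDeltam_shared; intros HF.
  set (u := p - 4 * c / a ^ 2); set (l := - (2 * c / a)).
  assert (Hl : l < 0) by (unfold l; assert (0 < 2 * c / a) by (apply Rdiv_lt_0_compat; lra); lra).
  assert (Hul : u - l <= 0).
  { assert (Hscaled : (u - l) * a ^ 2 = a ^ 2 * p - 2 * c * (2 - a))
      by (unfold u, l; field; lra).
    assert (0 < a ^ 2) by (apply pow_lt; lra).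
    assert (a ^ 2 * p - 2 * c * (2 - a) <= 0) by nra.
    nra. }
  split; [lra|].
  intro n.
  assert (Hdouble := Wr_double_root a b c d u l
    ltac:(unfold Af, u, l; field; lra) ltac:(unfold Bf, u, l; field; lra) n).
  assert (Hsign : (-1) ^ n * l ^ n = (- l) ^ n) by (rewrite <- Rpow_mult_distr; f_equal; ring).
  assert (Hpos : 0 < (- l) ^ n) by (apply pow_lt; lra).
  assert (Hlin : l + INR n * (u - l) < 0) by (pose proof (pos_INR n); nra).
  assert (Hprod : (-1) ^ n * Wr a b c d n u * l < 0).
  { rewrite Rmult_assoc, Hdouble, <- Rmult_assoc, Hsign; nra. }
  nra.
Qed.

Lemma root_below_xDeltam u : gfun a b c d u = 0 -> u < p -> 0 < 2 * u - Af a b u ->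
  u < xDeltam a b c d.
Proof.
  intros Hg Hup Hz; rewrite xDeltam_shared.
  assert (HD : (u - p) * (a ^ 2 * (u - p) + 4 * c) = (2 * u - Af a b u) ^ 2).
  { transitivity ((2 * u - Af a b u) ^ 2 - 4 * gfun a b c d u);
      [unfold gfun, Af, Bf; ring | rewrite Hg; ring]. }
  assert (Hneg : a ^ 2 * (u - p) + 4 * c < 0) by nra.
  assert (Ha2 : 0 < a ^ 2) by (apply pow_lt; lra).
  apply Rmult_lt_reg_r with (a ^ 2); [exact Ha2|].
  replace ((p - 4 * c / a ^ 2) * a ^ 2) with (p * a ^ 2 - 4 * c) by (field; lra).
  nra.
Qed.

Section PositiveF.

Hypothesis HF : 0 < Fq a b c d.

Let r := sqrt (Deltag a b c d).

Lemma Deltag_pos : 0 < Deltag a b c d.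
Proof. pose proof HF as H; unfold Fq in H; rewrite DeltaDelta_shared in H; nra. Qed.

Lemma F_factor_pos : 0 < a ^ 2 * p - 2 * c * (2 - a).
Proof. pose proof HF as H; rewrite Fq_shared in H; nra. Qed.

Lemma sqrt_Deltag_sqr : r * r = (c - a * p) ^ 2 - 4 * c * p * (1 - a).
Proof. unfold r; rewrite sqrt_sqrt, Deltag_shared; [ring | apply Rlt_le, Deltag_pos]. Qed.

Lemma root_denominator_neg : c - a * p - r < 0.
Proof.
  pose proof F_factor_pos.
  assert (Hr : 0 < r) by (apply sqrt_lt_R0, Deltag_pos).
  pose proof sqrt_Deltag_sqr.
  destruct (Rle_dec (c - a * p) 0); [lra|].
  assert (1 < a) by nra.
  assert (0 < c * p * (a - 1)) by (apply Rmult_lt_0_compat; nra).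
  nra.
Qed.

Lemma uu_root : uu a b c d * (c - a * p - r) = 2 * c * p.
Proof.
  assert (Hr := sqrt_Deltag_sqr).
  assert (Hm := root_denominator_neg).
  assert (HF' := F_factor_pos).
  (* for a <> 1 both branches are the same root u = (c - a p + r) / (2 (1 - a)) *)
  assert (Hgen : forall u, u * (2 * (1 - a)) = c - a * p + r -> a <> 1 ->
            u * (c - a * p - r) = 2 * c * p).
  { intros u Hu Ha1.
    apply Rmult_eq_reg_r with (2 * (1 - a)); [|intro; apply Ha1; lra].
    transitivity ((c - a * p - r) * (u * (2 * (1 - a)))); [ring|].
    rewrite Hu; nra. }
  assert (Huu : uu a b c d = if Rlt_dec a 1 then xgp a b c d else xgm a b c d).
  { unfold uu; destruct (Rlt_dec a 2); [|destruct (Rlt_dec a 1); [lra | reflexivity]].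
    destruct (Rle_dec (Fq a b c d) 0); [lra | reflexivity]. }
  rewrite Huu; unfold xgp, xgm; fold r.
  destruct (Req_EM_T a 1) as [Ha1 | Ha1]; destruct (Rlt_dec a 1); try lra.
  - assert (Hr0 : 0 <= r) by apply sqrt_pos.
    rewrite Ha1 in Hr, Hm, HF' |- *.
    assert (Hr1 : r = p - c) by nra.
    rewrite Hr1; field; lra.
  - apply Hgen; [rewrite Rabs_right by lra; field; lra | exact Ha1].
  - apply Hgen; [rewrite Rabs_left by lra; field; lra | exact Ha1].
Qed.

Lemma root_conditions u : u * (c - a * p - r) = 2 * c * p ->
  gfun a b c d u = 0 /\ u < 0 /\ 0 < 2 * u - Af a b u.
Proof.
  intros Hu.
  assert (Hr := sqrt_Deltag_sqr); assert (Hm := root_denominator_neg); assert (HF' := F_factor_pos).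
  assert (Hr0 : 0 < r) by (apply sqrt_lt_R0, Deltag_pos).
  set (m := c - a * p - r) in *.
  assert (Hneg : u < 0) by nra.
  split; [|split; [exact Hneg|]].
  - apply Rmult_eq_reg_r with (m * m); [|nra].
    transitivity ((1 - a) * (u * m) ^ 2 - (c - a * p) * (u * m) * m + c * p * (m * m));
      [unfold gfun, Af, Bf; ring|].
    rewrite Hu.
    transitivity (c * p * (4 * c * p * (1 - a) - ((c - a * p) ^ 2 - r * r)));
      [unfold m; ring | rewrite Hr; ring].
  - (* after multiplication by -m > 0 the claim reads L + a r > 0, and
       (a r)^2 - L^2 = 4 c (a^2 p - 2 c (2 - a)) > 0 *)
    set (L := a ^ 2 * p - (4 - a) * c).
    assert (HL : 0 < L + a * r).
    { destruct (Rle_dec 0 L); [nra|].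
      assert (Hsq : (a * r) ^ 2 - L ^ 2 = 4 * c * (a ^ 2 * p - 2 * c * (2 - a))).
      { replace ((a * r) ^ 2) with (a ^ 2 * (r * r)) by ring.
        rewrite Hr; unfold L; ring. }
      assert (0 < 4 * c * (a ^ 2 * p - 2 * c * (2 - a))) by (apply Rmult_lt_0_compat; lra).
      assert (0 < a * r) by (apply Rmult_lt_0_compat; lra).
      nra. }
    apply Rmult_lt_reg_r with (- m); [lra|].
    replace ((2 * u - Af a b u) * - m) with (- (2 - a) * (u * m) - a * p * m)
      by (unfold Af; ring).
    rewrite Hu; unfold m, L in *; nra.
Qed.

End PositiveF.

End SharedCenter.

Theorem lemma3p5 (a b c d : R) :
  0 < a -> 0 < c -> b < 0 -> d < 0 -> xA a b = xB c d ->
  uu a b c d <= xDeltam a b c d /\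
  uu a b c d < 0 /\
  (forall n : nat, 0 < (-1) ^ n * Wr a b c d n (uu a b c d)) /\
  (uu a b c d <> xDeltam a b c d ->
     limit_of_zeros a b c d (RtoC (uu a b c d)) /\
     isolated a b c d (RtoC (uu a b c d))).
Proof.
  intros Ha Hc Hb Hd Hx.
  set (p := xA a b).
  assert (Hp : 0 < p) by (unfold p, xA; apply Rdiv_lt_0_compat; lra).
  assert (Eb : b = - (a * p)) by (unfold p, xA; field; lra).
  assert (Ed : d = - (c * p)) by (unfold p; rewrite Hx; unfold xB; field; lra).
  clearbody p; subst b d.
  destruct (Rle_dec (Fq a (- (a * p)) c (- (c * p))) 0) as [HF | HF].
  - assert (Huu : uu a (- (a * p)) c (- (c * p)) = xDeltam a (- (a * p)) c (- (c * p))).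
    { assert (a < 2) by (rewrite Fq_shared in HF by lra; nra).
      unfold uu; destruct (Rlt_dec a 2); [destruct (Rle_dec (Fq _ _ _ _) 0)|]; easy. }
    rewrite Huu.
    destruct (double_root_case a c p Ha Hc Hp HF) as [Hneg Hpos].
    refine (conj (Rle_refl _) (conj Hneg (conj Hpos _))).
    intros Hne; contradiction (Hne eq_refl).
  - apply Rnot_le_lt in HF.
    destruct (root_conditions a c p Ha Hc Hp HF _ (uu_root a c p Ha Hc Hp HF))
      as [Hg [Hneg Hz]].
    destruct (root_case a (- (a * p)) c (- (c * p)) (uu a (- (a * p)) c (- (c * p))))
      as [Hpos [Hlim Hiso]]; auto; [unfold Af; nra | apply Deltag_pos; auto |].
    refine (conj _ (conj Hneg (conj Hpos (fun _ => conj Hlim Hiso)))).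
    left; apply root_below_xDeltam; auto; lra.
Qed.
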